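(* Let $G=(V,E)$ be a finite graph satisfying the $CD\psi(n,-K)$ condition for some $n>0$, $K>0$, where $\psi:(0,+\infty)\to\mathbb R$ is a $C^1$ concave function. Let $u$ be a positive solution of the heat equation $\partial_t u=\Delta u$ on $V$ and fix $0<\alpha<1$. Then for all vertices and all $t>0$, $$(1-\alpha)\Gamma^{\psi}(u)-\psi'(1)\frac{\partial_{t}u}{u}\leq \frac{n}{2(1-\alpha)t}+\frac{Kn}{\alpha}.$$
   Context: Graphs: $G=(V,E)$ is a connected, locally finite graph; each edge $xy$ carries a weight $w_{xy}>0$ (possibly asymmetric), and $\mu:V\to(0,\infty)$ is a vertex measure; $y\sim x$ means $xy\in E$. Laplacian: $\Delta f(x)=\frac{1}{\mu(x)}\sum_{y\sim x}w_{xy}(f(y)-f(x))$. For $\psi:(0,\infty)\to\mathbb R$ and $f:V\to(0,\infty)$: the $\psi$-Laplacian is $\Delta^\psi f(x)=\Delta\big[\psi\big(\tfrac{f}{f(x)}\big)\big](x)$ (the Laplacian at $x$ of the function $y\mapsto\psi(f(y)/f(x))$); for $C^1$ $\psi$, $\overline\psi(s)=\psi'(1)(s-1)-(\psi(s)-\psi(1))$ and the $\psi$-gradient is $\Gamma^\psi f=\Delta^{\overline\psi}f$; $(\Omega^\psi f)(x)=\Delta\big[\psi'\big(\tfrac{f}{f(x)}\big)\tfrac{f}{f(x)}\big(\tfrac{\Delta f}{f}-\tfrac{\Delta f(x)}{f(x)}\big)\big](x)$; and the second $\psi$-gradient is given by $2\Gamma_2^\psi(f)=\Omega^\psi f+\frac{\Delta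 f\,\Delta^\psi f}{f}-\frac{\Delta(f\Delta^\psi f)}{f}$. The graph satisfies $CD\psi(n,K)$ if for every $f:V\to(0,\infty)$ and every vertex, $\Gamma_2^\psi(f)\ge\frac1n(\Delta^\psi f)^2+K\Gamma^\psi(f)$. A positive solution of the heat equation on $U\subset V$ is $u:V\times[0,\infty)\to(0,\infty)$, continuously differentiable in $t$, with $\partial_t u=\Delta u$ at every $x\in U$, $t\ge0$; operators are applied to $u(\cdot,t)$ at each fixed time. *)

From HB Require Import structures.
From mathcomp Require Import all_boot all_order all_algebra.
From mathcomp Require Import all_classical all_reals all_analysis.
Set Implicit Arguments. Unset Strict Implicit. Unset Printing Implicit Defensive.
Import Order.TTheory GRing.Theory Num.Theory.
Import numFieldNormedType.Exports.
Local Open Scope ring_scope.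
Local Open Scope classical_set_scope.

Section GraphOps.
Variables (R : realType) (V : finType).
Variables (adj : rel V) (w : V -> V -> R) (mu : V -> R).

Definition Lap (f : V -> R) (x : V) : R :=
  (mu x)^-1 * \sum_(y | adj x y) w x y * (f y - f x).

Definition psiLap (psi : R -> R) (f : V -> R) (x : V) : R :=
  Lap (fun y => psi (f y / f x)) x.

Definition psibar (psi : R -> R) : R -> R :=
  fun s => derive1 psi 1 * (s - 1) - (psi s - psi 1).

Definition psiGamma (psi : R -> R) (f : V -> R) (x : V) : R :=
  psiLap (psibar psi) f x.

Definition psiOmega (psi : R -> R) (f : V -> R) (x : V) : R :=
  Lap (fun y => derive1 psi (f y / f x) * (f y / f x) *
                (Lap f y / f y - Lap f x / f x)) x.

Definition psiGamma2 (psi : R -> R) (f : V -> R) (x : V) : R :=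
  (psiOmega psi f x + Lap f x * psiLap psi f x / f x
   - Lap (fun y => f y * psiLap psi f y) x / f x) / 2.

Definition CDpsi (psi : R -> R) (n K : R) : Prop :=
  forall f : V -> R, (forall y, 0 < f y) ->
  forall x, psiGamma2 psi f x >= n^-1 * (psiLap psi f x) ^+ 2 + K * psiGamma psi f x.

End GraphOps.

(* Weighted graph data: symmetric edge relation (undirected graph),
   connected, positive (possibly asymmetric) weights on edges, positive measure. *)
Definition weighted_graph (R : realType) (V : finType)
  (adj : rel V) (w : V -> V -> R) (mu : V -> R) : Prop :=
  [/\ symmetric adj,
      (forall x y : V, connect adj x y),
      (forall x y, adj x y -> 0 < w x y) &
      (forall x, 0 < mu x)].

Definition C1_pos (R : realType) (psi : R -> R) : Prop :=
  (forall s : R, 0 < s -> derivable psi s 1) /\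
  (forall s : R, 0 < s -> {for s, continuous (derive1 psi)}).

Definition concave_pos (R : realType) (psi : R -> R) : Prop :=
  forall (s1 s2 l : R), 0 < s1 -> 0 < s2 -> 0 <= l <= 1 ->
    l * psi s1 + (1 - l) * psi s2 <= psi (l * s1 + (1 - l) * s2).

(* u : V -> [0,+oo) -> (0,+oo) positive solution of the heat equation on all of V:
   positive for t >= 0, differentiable in t on [0,+oo) (right derivative at 0),
   with d/dt u = Delta u.  (Values of u at t < 0 are irrelevant junk.) *)
Definition heat_solution (R : realType) (V : finType)
  (adj : rel V) (w : V -> V -> R) (mu : V -> R) (u : V -> R -> R) : Prop :=
  [/\ (forall x t, 0 <= t -> 0 < u x t),
      (forall x t, 0 < t -> derivable (u x) t 1 /\
                            derive1 (u x) t = Lap adj w mu (fun y => u y t) x) &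
      (forall x, (fun h => (u x h - u x 0) / h) h @[h --> 0^'+]
                   --> Lap adj w mu (fun y => u y 0) x)].

(* Maximum principle for the Li-Yau quantity
     H = (1 - alpha) Gamma^psi(u) - psi'(1) d_t u / u.
   Along the heat flow, 2 (1 - alpha) Gamma_2^psi(u) = Delta(u H)/u - (Delta u/u) H - d_t H.
   At a maximum of (t - eps) H over V x [eps, T], the Laplacian part is nonpositive and
   d_t ((t - eps) H) >= 0; with Delta^psi u = -(H + alpha Gamma^psi u), Gamma^psi u >= 0
   (psi is concave) and CDpsi(n, -K) this gives
   (t - eps) H <= n / (2 (1 - alpha)) + (t - eps) K n / (2 alpha).
   Choosing eps so that the first term absorbs half of K n / alpha yields the bound. *)

From Pilot Require Import Defs.
From HB Require Import structures.
From mathcomp Require Import all_boot all_order all_algebra.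
From mathcomp Require Import all_classical all_reals all_analysis.
From mathcomp Require Import ring lra.
Import Order.TTheory GRing.Theory Num.Theory.
Import numFieldNormedType.Exports.
Set Implicit Arguments. Unset Strict Implicit. Unset Printing Implicit Defensive.
Local Open Scope classical_set_scope.
Local Open Scope ring_scope.

Section Calculus.
Variable R : realType.
Implicit Types (f g : R -> R).

Lemma is_derive_big (I : finType) (P : pred I) (h : I -> R -> R) (dh : I -> R) (t : R) :
  (forall i, is_derive t 1 (h i) (dh i)) ->
  is_derive t 1 (fun s => \sum_(i | P i) h i s) (\sum_(i | P i) dh i).
Proof.
move=> Dh; rewrite -(fct_sumE (index_enum I) P h).
by elim/big_ind2 : _ => // *; [exact: is_derive_cst | exact: is_deriveD].
Qed.

Lemma is_derive_affine (a b t : R) : is_derive t 1 (fun s => s * a + b) a.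
Proof.
have -> : (fun s => s * a + b) = a \*: id + cst b.
  by apply/funext => s; rewrite /= mulrC.
apply: is_derive_eq (is_deriveD (is_deriveZ a (is_derive_id t 1)) (is_derive_cst b t 1)) _.
by rewrite /GRing.scale /= mulr1 addr0.
Qed.

Lemma is_derive_comp_ratio g (dg : R) (a b : R -> R) (da db t : R) :
  b t != 0 -> is_derive t 1 a da -> is_derive t 1 b db ->
  is_derive (a t / b t) 1 g dg ->
  is_derive t 1 (fun s => g (a s / b s)) (dg * ((da * b t - a t * db) / b t ^+ 2)).
Proof.
move=> bt0 Da Db Dg.
have Dab : is_derive t 1 (a * (fun s => (b s)^-1))
    (a t *: (- b t ^- 2 *: db) + (b t)^-1 *: da).
  by apply: is_deriveM => //; exact: is_deriveV.
have -> : (fun s => g (a s / b s)) = g \o (a * (fun s => (b s)^-1)) by [].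
apply: is_derive_eq (@is_derive1_comp _ g _ t dg _ Dg Dab) _.
by rewrite /GRing.scale /=; congr (_ * _); field.
Qed.

Lemma is_derive_ge0_left_max f (a c d : R) : a < c -> is_derive c 1 f d ->
  (forall s, a < s < c -> f s <= f c) -> 0 <= d.
Proof.
move=> ac [fdrv <-] cmax.
rewrite ['D_1 f c]cvg_at_leftE; last exact: fdrv.
apply: limr_ge.
  rewrite -(cvg_at_leftE (fun h => h^-1 *: ((f \o shift c) _ - f c))) //.
  apply: cvg_trans fdrv; apply: cvg_app.
  move=> A [e egt0 Ae]; exists e => // x xe xgt0; apply: Ae => //.
  exact/ltr0_neq0.
near=> h; apply: mulr_le0.
  by rewrite invr_le0; apply: ltW; near: h; exists 1 => /=.
rewrite subr_le0 [_%:A]mulr1; apply: cmax; near: h.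
exists (c - a); first by rewrite /= subr_gt0.
move=> h; rewrite /= distrC subr0 => /ltr_normlP [].
rewrite ltrBrDl ltrBlDl => -> _ h0 /=; lra.
Unshelve. all: by end_near. Qed.

(* Reflect [s |-> -s] to reduce to the left-maximum case. *)
Lemma is_derive_ge0_right_min f (c b d : R) : c < b -> is_derive c 1 f d ->
  (forall s, c < s < b -> f c <= f s) -> 0 <= d.
Proof.
move=> cb Df cmin.
have Dg : is_derive (- c) 1 (fun s => - f (- s)) d.
  have Dneg : is_derive (- c) 1 -%R (- 1) by exact: is_deriveNid.
  have Dfc : is_derive (- - c) 1 f d by rewrite opprK.
  by apply: is_derive_eq (is_deriveN (is_derive1_comp Dfc Dneg)) _; rewrite mulrN1 opprK.
apply: (is_derive_ge0_left_max (a := - b)) Dg _; first by rewrite ltrN2.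
move=> s /andP[bs sc]; rewrite opprK lerN2; apply: cmin.
by rewrite ltrNr sc ltrNl bs.
Qed.

End Calculus.

Section Concavity.
Variable R : realType.

(* A concave function lies below its tangent line at [1]. *)
Lemma psibar_ge0 (psi : R -> R) : derivable psi 1 1 -> concave_pos psi ->
  forall r : R, 0 < r -> 0 <= psibar psi r.
Proof.
move=> dpsi conc r r0.
pose chord (l : R) := psi (l * (r - 1) + 1) - psi 1 - l * (psi r - psi 1).
have Dpsi1 : is_derive (0 * (r - 1) + 1) 1 psi (derive1 psi 1).
  by rewrite mul0r add0r derive1E; exact: derivableP.
have Dchord : is_derive (0 : R) 1 chord (psibar psi r).
  have Dpsi := @is_derive1_comp _ psi (fun l => l * (r - 1) + 1) 0 _ _ Dpsi1
    (is_derive_affine (r - 1) 1 0).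
  have Dsum := is_deriveB (is_deriveB Dpsi (is_derive_cst (psi 1) (0 : R) 1))
    (is_derive_affine (psi r - psi 1) 0 0).
  have -> : chord = psi \o (fun l => l * (r - 1) + 1) - cst (psi 1)
                    - (fun l => l * (psi r - psi 1) + 0).
    by apply/funext => l; rewrite /chord !fctE /= addr0.
  by apply: is_derive_eq Dsum _; rewrite /psibar; ring.
apply: is_derive_ge0_right_min ltr01 Dchord _ => l /andP[l0 l1].
have := conc r 1 l r0 ltr01; rewrite (ltW l0) (ltW l1) => /(_ isT).
rewrite /chord mul0r add0r mul0r.
have -> : l * r + (1 - l) * 1 = l * (r - 1) + 1 by ring.
lra.
Qed.

End Concavity.

Section Laplacian.
Variables (R : realType) (V : finType) (adj : rel V) (w : V -> V -> R) (mu : V -> R).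
Local Notation Lap := (Lap adj w mu).
Implicit Types (f g h : V -> R).

Lemma eq_Lap g h x : (forall y, g y = h y) -> Lap g x = Lap h x.
Proof. by move=> gh; rewrite (funext gh). Qed.

Lemma Lap_comb (a b : R) g h x :
  Lap (fun y => a * g y + b * h y) x = a * Lap g x + b * Lap h x.
Proof.
rewrite /Lap mulrCA [b * (_ * _)]mulrCA -mulrDr; congr (_ * _).
by rewrite !mulr_sumr -big_split; apply: eq_bigr => y _ /=; ring.
Qed.

Lemma Lap_addc g (k : R) x : Lap (fun y => g y + k) x = Lap g x.
Proof. by rewrite /Lap; congr (_ * _); apply: eq_bigr => y _; congr (_ * _); ring. Qed.

Lemma is_derive_Lap (G : V -> R -> R) (G' : V -> R) x (t : R) :
  (forall y, is_derive t 1 (G y) (G' y)) ->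
  is_derive t 1 (fun s => Lap (fun y => G y s) x) (Lap G' x).
Proof. by move=> DG; apply: is_deriveZ; apply: is_derive_big. Qed.

Hypotheses (w_gt0 : forall x y, adj x y -> 0 < w x y) (mu_gt0 : forall x, 0 < mu x).

Lemma Lap_ge0_at_min g x : (forall y, g x <= g y) -> 0 <= Lap g x.
Proof.
move=> gmin; apply: mulr_ge0; first by rewrite invr_ge0 ltW.
apply: sumr_ge0 => y axy.
by rewrite mulr_ge0 ?subr_ge0 // ltW // w_gt0.
Qed.

Lemma Lap_mul_le_at_max f h x : (forall y, 0 < f y) -> (forall y, h y <= h x) ->
  Lap (fun y => f y * h y) x <= h x * Lap f x.
Proof.
move=> fpos hmax.
rewrite /Lap mulrCA ler_pM2l ?invr_gt0 // mulr_sumr ler_sum // => y axy.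
have : 0 <= w x y * f y * (h x - h y).
  by rewrite !mulr_ge0 ?subr_ge0 // ltW // ?w_gt0 ?fpos.
suff -> : h x * (w x y * (f y - f x)) =
  w x y * (f y * h y - f x * h x) + w x y * f y * (h x - h y) by lra.
ring.
Qed.

End Laplacian.

Section Arith.
Variable R : realType.

Lemma liyau_arith (n K a b h g s G2 : R) :
  0 < n -> 0 < K -> 0 < a -> 0 < b -> 0 <= g -> 0 < s ->
  2 * b * G2 * s <= h -> n^-1 * (h + a * g) ^+ 2 - K * g <= G2 ->
  s * h <= n / (2 * b) + s * (K * n / (2 * a)).
Proof.
move=> n0 K0 a0 b0 g0 s0 HG HC.
have bound_b : 0 <= n / (2 * b) by rewrite divr_ge0 //; lra.
have [small|large] := ltrP (2 * a * h) (K * n).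
  suff : s * h <= s * (K * n / (2 * a)) by lra.
  by rewrite ler_pM2l // ler_pdivlMr; lra.
have h0 : 0 < h by nra.
have G2h : h ^+ 2 <= n * G2.
  have : n * (n^-1 * (h + a * g) ^+ 2 - K * g) <= n * G2 by rewrite ler_pM2l.
  have -> : n * (n^-1 * (h + a * g) ^+ 2 - K * g) =
            h ^+ 2 + g * (2 * a * h - K * n) + (a * g) ^+ 2 by field; lra.
  have : 0 <= g * (2 * a * h - K * n) by rewrite mulr_ge0 // subr_ge0.
  have := sqr_ge0 (a * g); lra.
suff : s * h <= n / (2 * b).
  have : 0 <= s * (K * n / (2 * a)) by rewrite mulr_ge0 ?divr_ge0 ?mulr_ge0 //; lra.
  lra.
rewrite ler_pdivlMr; last lra.
rewrite -(ler_pM2l h0).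
have : 2 * b * s * h ^+ 2 <= 2 * b * s * (n * G2) by rewrite ler_pM2l // !mulr_gt0.
have : n * (2 * b * G2 * s) <= n * h by rewrite ler_pM2l.
lra.
Qed.

End Arith.

Section PsiCalculus.
Variables (R : realType) (V : finType) (adj : rel V) (w : V -> V -> R) (mu : V -> R).
Variable psi : R -> R.
Local Notation Lap := (Lap adj w mu).
Local Notation psiLap := (psiLap adj w mu psi).
Local Notation psiGamma := (psiGamma adj w mu psi).
Local Notation psiGamma2 := (psiGamma2 adj w mu psi).
Implicit Types (f : V -> R) (alpha : R).

Lemma psiGammaE f x : f x != 0 ->
  psiGamma f x = derive1 psi 1 * (Lap f x / f x) - psiLap f x.
Proof.
move=> fx0; rewrite /psiGamma /Defs.psiLap.
rewrite (@eq_Lap _ _ _ _ _ (fun y => psibar psi (f y / f x))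
  (fun y => (derive1 psi 1 / f x * f y + (-1) * psi (f y / f x))
            + (psi 1 - derive1 psi 1))); last by move=> y; rewrite /psibar; ring.
by rewrite Lap_addc Lap_comb; ring.
Qed.

Lemma psiGamma_ge0 f x :
  (forall x y, adj x y -> 0 < w x y) -> (forall x, 0 < mu x) ->
  derivable psi 1 1 -> concave_pos psi -> (forall y, 0 < f y) ->
  0 <= psiGamma f x.
Proof.
move=> w_gt0 mu_gt0 dpsi conc fpos; apply: Lap_ge0_at_min => // y.
rewrite divff ?gt_eqF // /psibar !subrr mulr0 subr0.
by apply: psibar_ge0 => //; rewrite divr_gt0.
Qed.

(* Along the heat flow, [Lap f x / f x] is the [d_t u / u] of the statement. *)
Definition liyau alpha f x :=
  (1 - alpha) * psiGamma f x - derive1 psi 1 * (Lap f x / f x).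

(* The time derivative of [liyau alpha f] along [d_t f = Delta f], by the chain rule. *)
Definition liyau_dt alpha f x :=
  (1 - alpha) * Lap (fun y => (derive1 psi 1 - derive1 psi (f y / f x)) *
      ((Lap f y * f x - f y * Lap f x) / f x ^+ 2)) x
  - derive1 psi 1 * ((Lap (Lap f) x * f x - Lap f x * Lap f x) / f x ^+ 2).

Lemma psiGamma2_liyau f x alpha : (forall y, f y != 0) ->
  2 * (1 - alpha) * psiGamma2 f x =
  Lap (fun y => f y * liyau alpha f y) x / f x - Lap f x / f x * liyau alpha f x
  - liyau_dt alpha f x.
Proof.
move=> fn0.
set c := derive1 psi 1; set D := psiLap f.
have liyauE z : liyau alpha f z = - (alpha * c) * (Lap f z / f z) - (1 - alpha) * D z.
  by rewrite /liyau psiGammaE // -/c -/D; ring.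
have Lap_fliyau : Lap (fun y => f y * liyau alpha f y) x =
    - (alpha * c) * Lap (Lap f) x + - (1 - alpha) * Lap (fun y => f y * D y) x.
  by rewrite -Lap_comb; apply: eq_Lap => y; rewrite liyauE; field.
have Lap_ratio_dt : Lap (fun y => (Lap f y * f x - f y * Lap f x) / f x ^+ 2) x =
    f x / f x ^+ 2 * Lap (Lap f) x + - (Lap f x / f x ^+ 2) * Lap f x.
  by rewrite -Lap_comb; apply: eq_Lap => y; field.
have Lap_dt : Lap (fun y => (c - derive1 psi (f y / f x)) *
      ((Lap f y * f x - f y * Lap f x) / f x ^+ 2)) x =
    c * Lap (fun y => (Lap f y * f x - f y * Lap f x) / f x ^+ 2) x
    + (-1) * psiOmega adj w mu psi f x.
  rewrite /psiOmega -Lap_comb; apply: eq_Lap => y.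
  by field; apply/andP; split.
rewrite /liyau_dt -/c Lap_dt Lap_ratio_dt Lap_fliyau liyauE /psiGamma2 -/D.
by field.
Qed.

End PsiCalculus.

Section MaxPrinciple.
Variables (R : realType) (V : finType) (adj : rel V) (w : V -> V -> R) (mu : V -> R).
Variables (psi : R -> R) (n K alpha : R).
Local Notation Lap := (Lap adj w mu).
Local Notation liyau := (liyau adj w mu psi alpha).
Local Notation liyau_dt := (liyau_dt adj w mu psi alpha).
Hypotheses (w_gt0 : forall x y, adj x y -> 0 < w x y) (mu_gt0 : forall x, 0 < mu x).
Hypotheses (dpsi1 : derivable psi 1 1) (conc : concave_pos psi).
Hypotheses (n_gt0 : 0 < n) (K_gt0 : 0 < K) (CD : CDpsi adj w mu psi n (- K)).
Hypothesis alpha01 : 0 < alpha < 1.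

Lemma liyau_le_at_max f z (s : R) : (forall y, 0 < f y) ->
  (forall y, liyau f y <= liyau f z) -> 0 < s -> 0 <= liyau f z + s * liyau_dt f z ->
  s * liyau f z <= n / (2 * (1 - alpha)) + s * (K * n / (2 * alpha)).
Proof.
move=> fpos zmax s_gt0 dt_ge0.
have fn0 y : f y != 0 by rewrite gt_eqF.
have [a_gt0 a_lt1] := andP alpha01.
have Lap_le : Lap (fun y => f y * liyau f y) z / f z - Lap f z / f z * liyau f z <= 0.
  rewrite subr_le0 ler_pdivrMr // mulrAC divfK //.
  by rewrite mulrC; apply: Lap_mul_le_at_max.
have Gamma2_le : 2 * (1 - alpha) * psiGamma2 adj w mu psi f z * s <= liyau f z.
  rewrite psiGamma2_liyau //; nra.
have psiLapE : psiLap adj w mu psi f z =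
    - (liyau f z + alpha * psiGamma adj w mu psi f z).
  by rewrite /liyau psiGammaE //; ring.
have := CD fpos z; rewrite psiLapE sqrrN mulNr => CDz.
apply: liyau_arith CDz => //; first lra.
exact: psiGamma_ge0.
Qed.

End MaxPrinciple.

Lemma EVT_max_fin (R : realType) (V : finType) (F : V -> R -> R) (a b : R) (x0 : V) :
  a <= b -> (forall z, {within `[a, b], continuous (F z)}) ->
  exists z t, t \in `[a, b] /\ forall y s, s \in `[a, b] -> F y s <= F z t.
Proof.
move=> ab Fcont.
have /choice [tm tmP] : forall z, exists t, t \in `[a, b] /\
    forall s, s \in `[a, b] -> F z s <= F z t.
  by move=> z; have [t ? ?] := EVT_max ab (Fcont z); exists t.
have [z _ zmax] := @Order.TotalTheory.arg_maxP _ R V x0 xpredT (fun z => F z (tm z)) isT.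
exists z, (tm z); split=> [|y s sab]; first exact: (tmP z).1.
by apply: le_trans (zmax y isT); exact: (tmP y).2.
Qed.

Section HeatFlow.
Variables (R : realType) (V : finType) (adj : rel V) (w : V -> V -> R) (mu : V -> R).
Variables (psi : R -> R) (u : V -> R -> R).
Local Notation Lap := (Lap adj w mu).
Hypotheses (dpsi : forall s : R, 0 < s -> derivable psi s 1).
Hypotheses (u_gt0 : forall y (s : R), 0 < s -> 0 < u y s)
  (u_heat : forall y (s : R), 0 < s -> is_derive s 1 (u y) (Lap (fun z => u z s) y)).

Lemma is_derive_psibar (r : R) : 0 < r ->
  is_derive r 1 (psibar psi) (derive1 psi 1 - derive1 psi r).
Proof.
move=> r_gt0; have Dpsi : is_derive r 1 psi (derive1 psi r).
  by rewrite derive1E; apply: derivableP; exact: dpsi.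
have -> : psibar psi = (fun s => s * derive1 psi 1 + (psi 1 - derive1 psi 1)) - psi.
  by apply/funext => s; rewrite /psibar !fctE; ring.
exact: is_deriveB (is_derive_affine _ _ r) Dpsi.
Qed.

Lemma is_derive_liyau alpha z (s : R) : 0 < s ->
  is_derive s 1 (fun r => liyau adj w mu psi alpha (fun y => u y r) z)
    (liyau_dt adj w mu psi alpha (fun y => u y s) z).
Proof.
move=> s_gt0; have uz0 : u z s != 0 by rewrite gt_eqF // u_gt0.
have DGamma : is_derive s 1 (fun r => psiGamma adj w mu psi (fun y => u y r) z)
    (Lap (fun y => (derive1 psi 1 - derive1 psi (u y s / u z s)) *
      ((Lap (fun y => u y s) y * u z s - u y s * Lap (fun y => u y s) z) / u z s ^+ 2)) z).
  apply: (@is_derive_Lap _ _ adj w mu (fun y r => psibar psi (u y r / u z r))) => y.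
  apply: is_derive_comp_ratio; [exact: uz0 | exact: u_heat | exact: u_heat |].
  by apply: is_derive_psibar; rewrite divr_gt0 ?u_gt0.
have Dratio : is_derive s 1 (fun r => id (Lap (fun y => u y r) z / u z r))
    (1 * ((Lap (Lap (fun y => u y s)) z * u z s -
           Lap (fun y => u y s) z * Lap (fun y => u y s) z) / u z s ^+ 2)).
  apply: (is_derive_comp_ratio (g := id) (a := fun r => Lap (fun y => u y r) z) (b := u z))
    => //; last exact: u_heat.
  by apply: is_derive_Lap => y; exact: u_heat.
apply: is_derive_eq (is_deriveB (is_deriveZ (1 - alpha) DGamma)
  (is_deriveZ (derive1 psi 1) Dratio)) _.
by rewrite /liyau_dt /GRing.scale /= mul1r.
Qed.

Variables (n K alpha : R).
Hypotheses (w_gt0 : forall x y, adj x y -> 0 < w x y) (mu_gt0 : forall x, 0 < mu x).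
Hypotheses (conc : concave_pos psi) (n_gt0 : 0 < n) (K_gt0 : 0 < K).
Hypotheses (CD : CDpsi adj w mu psi n (- K)) (alpha01 : 0 < alpha < 1).
Local Notation liyau := (liyau adj w mu psi alpha).
Local Notation liyau_dt := (liyau_dt adj w mu psi alpha).

(* Maximum principle for [(s - eps) * liyau (u s)] on [V x [eps, T]]. *)
Lemma liyau_le_shifted x (T eps : R) : 0 < eps < T ->
  liyau (fun y => u y T) x <= n / (2 * (1 - alpha) * (T - eps)) + K * n / (2 * alpha).
Proof.
move=> /andP[eps_gt0 eps_lt_T]; have [a_gt0 a_lt1] := andP alpha01.
pose F z s := (s - eps) * liyau (fun y => u y s) z.
have DF z (s : R) : 0 < s ->
    is_derive s 1 (F z) (liyau (u^~ s) z + (s - eps) * liyau_dt (u^~ s) z).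
  move=> s_gt0; have -> : F z = (fun r => r * 1 + - eps) * (fun r => liyau (u^~ r) z).
    by apply/funext => r; rewrite /F !fctE mulr1.
  apply: is_derive_eq (is_deriveM (is_derive_affine _ _ s) (is_derive_liyau _ z s_gt0)) _.
  by rewrite /GRing.scale /=; ring.
have Fcont z : {within `[eps, T], continuous (F z)}.
  apply: derivable_within_continuous => s; rewrite in_itv /= => /andP[eps_le_s _].
  by have [] := DF z s (lt_le_trans eps_gt0 eps_le_s).
have [xs [ts [ts_in Fmax]]] := EVT_max_fin x (ltW eps_lt_T) Fcont.
have Kn_ge0 : 0 <= K * n / (2 * alpha) by rewrite divr_ge0 ?mulr_ge0 ?ltW.
pose M := n / (2 * (1 - alpha)) + (T - eps) * (K * n / (2 * alpha)).
have FM : F xs ts <= M.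
  have M_ge0 : 0 <= M.
    have : 0 <= n / (2 * (1 - alpha)) by rewrite divr_ge0 ?ltW //; lra.
    have : 0 <= (T - eps) * (K * n / (2 * alpha)) by rewrite mulr_ge0 //; lra.
    rewrite /M; lra.
  have [|F_gt0] := lerP (F xs ts) 0; first lra.
  move: (ts_in); rewrite in_itv /= => /andP[eps_le_ts ts_le_T].
  have ts_eps : 0 < ts - eps.
    rewrite subr_gt0 lt_neqAle eps_le_ts andbT; apply/eqP => eps_ts.
    by move: F_gt0; rewrite /F -eps_ts subrr mul0r ltxx.
  have ts_gt0 : 0 < ts by lra.
  have Hmax y : liyau (u^~ ts) y <= liyau (u^~ ts) xs.
    by have := Fmax y ts ts_in; rewrite /F ler_pM2l.
  have Hdt : 0 <= liyau (u^~ ts) xs + (ts - eps) * liyau_dt (u^~ ts) xs.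
    apply: (@is_derive_ge0_left_max _ (F xs) eps ts _ _ (DF xs ts ts_gt0)); first lra.
    move=> s /andP[eps_s s_ts]; apply: Fmax.
    by rewrite in_itv /= (ltW eps_s) /=; lra.
  have := liyau_le_at_max w_gt0 mu_gt0 (dpsi ltr01) conc n_gt0 K_gt0 CD alpha01
    (fun y => u_gt0 y ts_gt0) Hmax ts_eps Hdt.
  have : (ts - eps) * (K * n / (2 * alpha)) <= (T - eps) * (K * n / (2 * alpha)).
    by rewrite ler_wpM2r //; lra.
  rewrite /F /M; lra.
have : F x T <= M by apply: le_trans FM; apply: Fmax; rewrite in_itv /= lexx (ltW eps_lt_T).
have -> : M = (T - eps) * (n / (2 * (1 - alpha) * (T - eps)) + K * n / (2 * alpha)).
  by rewrite /M; field; lra.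
by rewrite /F ler_pM2l // subr_gt0.
Qed.

End HeatFlow.

Theorem mainTheorem4 (R : realType) (V : finType)
  (adj : rel V) (w : V -> V -> R) (mu : V -> R)
  (psi : R -> R) (n K alpha : R) (u : V -> R -> R) :
  weighted_graph adj w mu ->
  C1_pos psi -> concave_pos psi ->
  0 < n -> 0 < K ->
  CDpsi adj w mu psi n (- K) ->
  heat_solution adj w mu u ->
  0 < alpha < 1 ->
  forall (x : V) (t : R), 0 < t ->
    (1 - alpha) * psiGamma adj w mu psi (fun y => u y t) x
      - derive1 psi 1 * (derive1 (u x) t / u x t)
    <= n / (2 * (1 - alpha) * t) + K * n / alpha.
Proof.
move=> [_ _ w_gt0 mu_gt0] [dpsi _] conc n_gt0 K_gt0 CD [u_ge0 u_der _] alpha01 x t t_gt0.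
have [a_gt0 a_lt1] := andP alpha01.
have u_gt0 y (s : R) : 0 < s -> 0 < u y s by move=> s_gt0; apply/u_ge0/ltW.
have u_heat y (s : R) : 0 < s -> is_derive s 1 (u y) (Lap adj w mu (fun z => u z s) y).
  by move=> s_gt0; have [du <-] := u_der y s s_gt0; rewrite derive1E; exact: derivableP.
rewrite (u_der x t t_gt0).2.
(* [t - eps] is chosen so that [n / (2 (1 - alpha) (t - eps)) = n / (2 (1 - alpha) t) + K n / (2 alpha)]. *)
pose eps := t - t * alpha / (alpha + (1 - alpha) * K * t).
have KT_gt0 : 0 < (1 - alpha) * K * t by rewrite !mulr_gt0 // subr_gt0.
have teps_gt0 : 0 < t * alpha / (alpha + (1 - alpha) * K * t).
  by rewrite !divr_gt0 ?mulr_gt0 //; lra.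
have eps_gt0 : 0 < eps.
  by rewrite subr_gt0 ltr_pdivrMr ?mulrDr ?ltrDl ?mulr_gt0 //; lra.
have -> : n / (2 * (1 - alpha) * t) + K * n / alpha =
          n / (2 * (1 - alpha) * (t - eps)) + K * n / (2 * alpha).
  rewrite /eps opprB addrCA subrr addr0; field.
  by rewrite !gt_eqF //; lra.
have eps_in : 0 < eps < t by rewrite eps_gt0 /eps /=; lra.
exact: (liyau_le_shifted dpsi u_gt0 u_heat w_gt0 mu_gt0 conc n_gt0 K_gt0 CD alpha01 x eps_in).
Qed.
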